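(* Let $\alpha>0$ and $M>1$ be real numbers, and let $x\in[0,M]$. For $n\in\mathbb N$ define $$C_{\alpha,n}(M;x)=\sum_{k=0}^{\lfloor M\rfloor}f_n(k),\qquad f_n(t)=\begin{cases}0 & \text{if } t=0 \text{ or } x=0,\\ t^\alpha\cos^{2n}(\pi x/t) & \text{otherwise}.\end{cases}$$ Then the sequence $n\mapsto C_{\alpha,n}(M;x)$ is non-increasing and $\lim_{n\to\infty}C_{\alpha,n}(M;x)=\sigma_\alpha(x)$.
   Context: For $m\in\mathbb N$, $\sigma_\alpha(m)=\sum_{k\mid m}k^\alpha$ (sum over positive divisors $k$ of $m$), and $\sigma_\alpha$ is extended to $[0,\infty)$ by setting $\sigma_\alpha(x)=0$ for $x\in[0,\infty)\setminus\mathbb N$. The sum over $k$ runs over integers $0\le k\le\lfloor M\rfloor$. *)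

From Stdlib Require Import Reals Lra Lia List.
Open Scope R_scope.

Definition sigma_nat (alpha : R) (m : nat) : R :=
  fold_right Rplus 0
    (map (fun k => Rpower (INR k) alpha)
         (filter (fun k => Nat.eqb (Nat.modulo m k) 0) (seq 1 m))).

(* Extension to [0, oo): sigma_alpha(x) = sigma_nat alpha m if x = m is a
   positive integer, and 0 otherwise (in particular sigma_alpha(0) = 0). *)
Definition sigma_real (alpha x : R) : R :=
  let m := Z.to_nat (Int_part x) in
  if Req_EM_T x (INR m) then
    (if Nat.ltb 0 m then sigma_nat alpha m else 0)
  else 0.

Definition f_term (alpha x : R) (n k : nat) : R :=
  if Nat.eqb k 0 then 0
  else if Req_EM_T x 0 then 0
  else Rpower (INR k) alpha * (cos (PI * x / INR k)) ^ (2 * n).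

Definition C_seq (alpha M x : R) (n : nat) : R :=
  sum_f_R0 (fun k => f_term alpha x n k) (Z.to_nat (Int_part M)).

From Stdlib Require Import Reals Lra Lia ZArith List.
Open Scope R_scope.

(* For k > 0 and x <> 0 the k-th summand is k^alpha q^n with q = cos^2 (PI x / k)
   in [0, 1], so it does not increase with n and tends to k^alpha when q = 1 and
   to 0 otherwise.  Now q = 1 iff x / k is an integer, and since 0 <= x, this
   happens iff x is a natural number divisible by k.  The limit of the finite
   sum is therefore the sum of k^alpha over the divisors k <= floor M of x; as
   x <= M, these are all the divisors of x. *)

Lemma Un_cv_const (a : R) : Un_cv (fun _ => a) a.
Proof.
  intros e He; exists 0%nat; intros n _.
  unfold Rdist; rewrite Rminus_diag, Rabs_R0; exact He.
Qed.

Lemma Un_cv_sum_f_R0 (u : nat -> nat -> R) (l : nat -> R) (N : nat) :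
  (forall k, Un_cv (fun n => u n k) (l k)) ->
  Un_cv (fun n => sum_f_R0 (u n) N) (sum_f_R0 l N).
Proof.
  intros Hu; induction N as [|N IH]; simpl.
  - apply Hu.
  - apply CV_plus; [exact IH | apply Hu].
Qed.

Lemma Un_cv_pow_unit_interval (c : R) :
  0 <= c <= 1 -> Un_cv (fun n => c ^ n) (if Req_EM_T c 1 then 1 else 0).
Proof.
  intros Hc; destruct (Req_EM_T c 1) as [-> | Hc1].
  - apply (Un_cv_ext (fun _ => 1)); [intro n; symmetry; apply pow1 | apply Un_cv_const].
  - intros e He.
    destruct (pow_lt_1_zero c) with (y := e) as [N HN]; [rewrite Rabs_right; lra | exact He |].
    exists N; intros n Hn; unfold Rdist; rewrite Rminus_0_r; auto.
Qed.

Lemma sum_f_R0_eq_0 (f : nat -> R) (N : nat) :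
  (forall k, (k <= N)%nat -> f k = 0) -> sum_f_R0 f N = 0.
Proof.
  intros Hf; induction N as [|N IH]; simpl.
  - apply Hf; lia.
  - rewrite IH by (intros; apply Hf; lia).
    rewrite Hf by lia; ring.
Qed.

Lemma sum_f_R0_tail_0 (f : nat -> R) (m N : nat) :
  (m <= N)%nat -> (forall k, (m < k <= N)%nat -> f k = 0) ->
  sum_f_R0 f N = sum_f_R0 f m.
Proof.
  intros HmN Hf; induction N as [|N IH].
  - replace m with 0%nat by lia; reflexivity.
  - destruct (Nat.eq_dec m (S N)) as [-> | Hm]; [reflexivity |].
    simpl; rewrite IH by (lia || intros; apply Hf; lia).
    rewrite Hf by lia; ring.
Qed.

Lemma Rsqr_cos_eq_1_iff (y : R) : (cos y)² = 1 <-> exists j : Z, y = IZR j * PI.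
Proof.
  pose proof (sin2_cos2 y) as Hsc; split.
  - intros Hc; apply sin_eq_0_0.
    apply Rsqr_0_uniq; lra.
  - intros Hy; apply sin_eq_0_1 in Hy.
    rewrite Hy, Rsqr_0 in Hsc; lra.
Qed.

Definition cos_sq (x : R) (k : nat) : R := (cos (PI * x / INR k))².

Lemma cos_sq_bound (x : R) (k : nat) : 0 <= cos_sq x k <= 1.
Proof. apply Rtrigo_facts.cos2_bound. Qed.

Lemma cos_sq_eq_1_iff (x : R) (k : nat) :
  (0 < k)%nat -> cos_sq x k = 1 <-> exists j : Z, x = IZR j * INR k.
Proof.
  intros Hk; pose proof (lt_0_INR k Hk) as HkR; pose proof PI_RGT_0 as HPI.
  unfold cos_sq; rewrite Rsqr_cos_eq_1_iff.
  split; intros [j Hj]; exists j.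
  - apply (Rmult_eq_reg_l (PI / INR k)); [| apply Rgt_not_eq, Rdiv_lt_0_compat; lra].
    replace (PI / INR k * x) with (PI * x / INR k) by (field; lra).
    rewrite Hj; field; lra.
  - rewrite Hj; field; lra.
Qed.

Lemma cos_sq_INR_eq_1_iff (m k : nat) :
  (0 < k)%nat -> cos_sq (INR m) k = 1 <-> (m mod k = 0)%nat.
Proof.
  intros Hk; rewrite cos_sq_eq_1_iff, Nat.Lcm0.mod_divide by exact Hk.
  split.
  - intros [j Hj]; rewrite !INR_IZR_INZ, <- mult_IZR in Hj; apply eq_IZR in Hj.
    exists (Z.to_nat j); lia.
  - intros [j ->]; exists (Z.of_nat j); rewrite mult_INR, INR_IZR_INZ; reflexivity.
Qed.

Lemma cos_sq_eq_1_INR (x : R) (k : nat) :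
  (0 < k)%nat -> 0 <= x -> cos_sq x k = 1 -> exists m : nat, x = INR m.
Proof.
  intros Hk Hx Hc; apply cos_sq_eq_1_iff in Hc as [j Hj]; [| exact Hk].
  rewrite INR_IZR_INZ, <- mult_IZR in Hj.
  exists (Z.to_nat (j * Z.of_nat k)).
  rewrite INR_IZR_INZ, Z2Nat.id; [exact Hj |].
  apply le_IZR; lra.
Qed.

Definition f_weight (alpha x : R) (k : nat) : R :=
  if Nat.eqb k 0 then 0 else if Req_EM_T x 0 then 0 else Rpower (INR k) alpha.

Lemma f_weight_ge0 (alpha x : R) (k : nat) : 0 <= f_weight alpha x k.
Proof.
  unfold f_weight; destruct (Nat.eqb k 0), (Req_EM_T x 0); try lra.
  apply Rlt_le, exp_pos.
Qed.

Lemma f_term_eq_weight (alpha x : R) (n k : nat) :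
  f_term alpha x n k = f_weight alpha x k * cos_sq x k ^ n.
Proof.
  unfold f_term, f_weight, cos_sq; rewrite Rsqr_pow2, <- pow_mult.
  destruct (Nat.eqb k 0), (Req_EM_T x 0); ring.
Qed.

Lemma f_term_decreasing (alpha x : R) (n k : nat) :
  f_term alpha x (S n) k <= f_term alpha x n k.
Proof.
  rewrite !f_term_eq_weight; simpl.
  pose proof (cos_sq_bound x k) as Hc.
  pose proof (pow_le _ n (proj1 Hc)); pose proof (f_weight_ge0 alpha x k).
  rewrite <- (Rmult_1_l (cos_sq x k ^ n)) at 2.
  apply Rmult_le_compat_l; [lra |].
  apply Rmult_le_compat_r; lra.
Qed.

Definition f_limit (alpha x : R) (k : nat) : R :=
  f_weight alpha x k * (if Req_EM_T (cos_sq x k) 1 then 1 else 0).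

Lemma f_term_cv (alpha x : R) (k : nat) :
  Un_cv (fun n => f_term alpha x n k) (f_limit alpha x k).
Proof.
  apply (Un_cv_ext (fun n => f_weight alpha x k * cos_sq x k ^ n)).
  { intro n; symmetry; apply f_term_eq_weight. }
  apply CV_mult; [apply Un_cv_const |].
  apply Un_cv_pow_unit_interval, cos_sq_bound.
Qed.

Definition divisor_term (alpha : R) (m k : nat) : R :=
  if Nat.eqb k 0 then 0
  else if Nat.eqb (m mod k) 0 then Rpower (INR k) alpha else 0.

Lemma fold_right_Rplus (a : R) (l : list R) :
  fold_right Rplus a l = fold_right Rplus 0 l + a.
Proof. induction l as [|b l IH]; simpl; [| rewrite IH]; ring. Qed.

Lemma sum_divisor_term_seq (alpha : R) (m N : nat) :
  sum_f_R0 (divisor_term alpha m) N =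
  fold_right Rplus 0 (map (fun k => Rpower (INR k) alpha)
    (filter (fun k => Nat.eqb (m mod k) 0) (seq 1 N))).
Proof.
  induction N as [|N IH]; [reflexivity |].
  rewrite seq_S, filter_app, map_app, fold_right_app, fold_right_Rplus, <- IH.
  change (1 + N)%nat with (S N); cbn [sum_f_R0 filter].
  unfold divisor_term at 2; simpl (Nat.eqb (S N) 0); cbv iota.
  destruct (Nat.eqb (m mod S N) 0); cbn [map fold_right]; ring.
Qed.

Lemma sum_divisor_term_eq_sigma_nat (alpha : R) (m N : nat) :
  (0 < m)%nat -> (m <= N)%nat -> sum_f_R0 (divisor_term alpha m) N = sigma_nat alpha m.
Proof.
  intros Hm HmN; rewrite (sum_f_R0_tail_0 _ m N HmN).
  - apply sum_divisor_term_seq.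
  - intros k Hk; unfold divisor_term.
    rewrite (proj2 (Nat.eqb_neq k 0)), Nat.mod_small, (proj2 (Nat.eqb_neq m 0)) by lia.
    reflexivity.
Qed.

Lemma sigma_real_INR (alpha : R) (m : nat) : sigma_real alpha (INR m) = sigma_nat alpha m.
Proof.
  unfold sigma_real; rewrite Int_part_INR, Nat2Z.id.
  destruct (Req_EM_T (INR m) (INR m)) as [_ | Hm]; [| contradiction].
  destruct m; reflexivity.
Qed.

Lemma sigma_real_not_INR (alpha x : R) :
  (forall m : nat, x <> INR m) -> sigma_real alpha x = 0.
Proof.
  intros Hx; unfold sigma_real.
  destruct (Req_EM_T x _) as [E | _]; [destruct (Hx _ E) | reflexivity].
Qed.

Lemma INR_dec (x : R) : {m : nat | x = INR m} + {forall m : nat, x <> INR m}.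
Proof.
  destruct (Req_EM_T x (INR (Z.to_nat (Int_part x)))) as [E | E].
  - left; eexists; exact E.
  - right; intros m ->; apply E; rewrite Int_part_INR, Nat2Z.id; reflexivity.
Qed.

Lemma INR_le_Int_part (m : nat) (M : R) : INR m <= M -> (m <= Z.to_nat (Int_part M))%nat.
Proof.
  intros HmM; destruct (base_Int_part M) as [_ Hfl].
  assert (Hlt : IZR (Z.of_nat m) < IZR (Int_part M + 1)) by (rewrite <- INR_IZR_INZ, plus_IZR; lra).
  apply lt_IZR in Hlt; lia.
Qed.

Lemma f_limit_0 (alpha : R) (k : nat) : f_limit alpha 0 k = 0.
Proof.
  unfold f_limit, f_weight; destruct (Nat.eqb k 0), (Req_EM_T 0 0); try lra; ring.
Qed.

Lemma f_limit_INR (alpha : R) (m k : nat) :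
  (0 < m)%nat -> f_limit alpha (INR m) k = divisor_term alpha m k.
Proof.
  intros Hm; unfold f_limit, f_weight, divisor_term.
  destruct (Nat.eqb k 0) eqn:Hk; [ring |]; apply Nat.eqb_neq in Hk.
  destruct (Req_EM_T (INR m) 0) as [E | _]; [apply lt_0_INR in Hm; lra |].
  pose proof (cos_sq_INR_eq_1_iff m k ltac:(lia)) as Hc.
  destruct (Req_EM_T (cos_sq (INR m) k) 1) as [E | E];
    destruct (Nat.eqb (m mod k) 0) eqn:Hmk;
    rewrite ?Nat.eqb_eq, ?Nat.eqb_neq in Hmk; try ring; tauto.
Qed.

Lemma f_limit_not_INR (alpha x : R) (k : nat) :
  0 <= x -> (forall m : nat, x <> INR m) -> f_limit alpha x k = 0.
Proof.
  intros Hx Hnat; unfold f_limit, f_weight.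
  destruct (Nat.eqb k 0) eqn:Hk; [ring |]; apply Nat.eqb_neq in Hk.
  destruct (Req_EM_T x 0); [ring |].
  destruct (Req_EM_T (cos_sq x k) 1) as [E | _]; [| ring].
  destruct (cos_sq_eq_1_INR x k ltac:(lia) Hx E) as [m Hm]; destruct (Hnat m Hm).
Qed.

Lemma sum_f_limit_eq_sigma_real (alpha M x : R) :
  0 <= x <= M -> sum_f_R0 (f_limit alpha x) (Z.to_nat (Int_part M)) = sigma_real alpha x.
Proof.
  intros Hx; destruct (INR_dec x) as [[m ->] | Hnat].
  - rewrite sigma_real_INR; destruct m as [|m].
    + apply sum_f_R0_eq_0; intros k _; apply f_limit_0.
    + rewrite (sum_eq _ (divisor_term alpha (S m))) by (intros; apply f_limit_INR; lia).
      apply sum_divisor_term_eq_sigma_nat; [lia | apply INR_le_Int_part; lra].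
  - rewrite sigma_real_not_INR by exact Hnat.
    apply sum_f_R0_eq_0; intros k _; apply f_limit_not_INR; [lra | exact Hnat].
Qed.

Theorem proposition2p1 (alpha M x : R) :
  0 < alpha -> 1 < M -> 0 <= x <= M ->
  (forall n : nat, C_seq alpha M x (S n) <= C_seq alpha M x n) /\
  Un_cv (fun n => C_seq alpha M x n) (sigma_real alpha x).
Proof.
  intros _ _ Hx; unfold C_seq; split.
  - intro n; apply sum_Rle; intros k _; apply f_term_decreasing.
  - rewrite <- (sum_f_limit_eq_sigma_real alpha M x Hx).
    apply Un_cv_sum_f_R0; intro k; apply f_term_cv.
Qed.
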